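(* Let $(X,\to)$ be a transition system over $A$ (of arbitrary branching type). Then $\mathit{lo}_t$ is $c_t$-compatible, i.e. $\mathit{lo}_t(c_t(\mathcal S))\subseteq c_t(\mathit{lo}_t(\mathcal S))$ for every $\mathcal S\subseteq\mathcal P(X)$.
   Context: $\Diamond_a(S)=\{x\mid\exists x'\in S\colon x\xrightarrow{a}x'\}$; $\mathit{lo}_t(\mathcal S)=\bigcup_{a\in A}\{\Diamond_a(S)\mid S\in\mathcal S\}\cup\{X\}$. $\alpha_t(\mathcal S)=\{(X_1,X_2)\in\mathcal P(X)^2\mid\forall S\in\mathcal S\colon(X_1\cap S\neq\emptyset\iff X_2\cap S\neq\emptyset)\}$, $\gamma_t(R)=\{S\subseteq X\mid\forall(X_1,X_2)\in R\colon(X_1\cap S\neq\emptyset\iff X_2\cap S\neq\emptyset)\}$ for equivalences $R$ on $\mathcal P(X)$, and $c_t=\gamma_t\circ\alpha_t$. *)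

(* Sets over X are predicates X -> Prop; families of sets
   (subsets of P(X)) are predicates (X -> Prop) -> Prop. Equality of sets is
   extensional (seteq). *)
Set Implicit Arguments.

Definition seteq {X : Type} (S T : X -> Prop) : Prop := forall x, S x <-> T x.

Definition meets {X : Type} (S T : X -> Prop) : Prop := exists x, S x /\ T x.

Definition diamond {X A : Type} (step : X -> A -> X -> Prop) (a : A)
  (S : X -> Prop) : X -> Prop :=
  fun x => exists x', S x' /\ step x a x'.

Definition lo_t {X A : Type} (step : X -> A -> X -> Prop)
  (SS : (X -> Prop) -> Prop) : (X -> Prop) -> Prop :=
  fun T => (exists (a : A) (S : X -> Prop), SS S /\ seteq T (diamond step a S))
           \/ seteq T (fun _ => True).

Definition alpha_t {X : Type} (SS : (X -> Prop) -> Prop)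
  : (X -> Prop) -> (X -> Prop) -> Prop :=
  fun X1 X2 => forall S, SS S -> (meets X1 S <-> meets X2 S).

Definition gamma_t {X : Type} (R : (X -> Prop) -> (X -> Prop) -> Prop)
  : (X -> Prop) -> Prop :=
  fun S => forall X1 X2, R X1 X2 -> (meets X1 S <-> meets X2 S).

Definition c_t {X : Type} (SS : (X -> Prop) -> Prop) : (X -> Prop) -> Prop :=
  gamma_t (alpha_t SS).

Definition fam_subset {X : Type} (SS TT : (X -> Prop) -> Prop) : Prop :=
  forall S, SS S -> TT S.

From Stdlib Require Import Setoid.

(* A set meets [diamond step a S] iff its a-successor set meets [S].  Hence
   two sets that meet the same members of [lo_t step SS] have a-successor sets
   that meet the same members of [SS], hence also the same members of
   [c_t SS], and therefore the original sets meet the same [diamond step a S]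
   for [S] in [c_t SS].  The full set is in [lo_t step SS] outright. *)

Lemma meets_seteq_r {X : Type} (Y : X -> Prop) {T U : X -> Prop} :
  seteq T U -> (meets Y T <-> meets Y U).
Proof.
  intros HTU; split; intros [x [Yx Hx]]; exists x; split; auto; apply HTU; auto.
Qed.

Lemma gamma_t_seteq {X : Type} {R : (X -> Prop) -> (X -> Prop) -> Prop}
  {T U : X -> Prop} :
  seteq T U -> gamma_t R U -> gamma_t R T.
Proof.
  intros HTU HU X1 X2 H12.
  rewrite (meets_seteq_r X1 HTU), (meets_seteq_r X2 HTU).
  exact (HU X1 X2 H12).
Qed.

Section Transitions.

Context {X A : Type} (step : X -> A -> X -> Prop).

Definition post (a : A) (Y : X -> Prop) : X -> Prop :=
  fun x' => exists x, Y x /\ step x a x'.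

Lemma meets_diamond (a : A) (Y S : X -> Prop) :
  meets Y (diamond step a S) <-> meets (post a Y) S.
Proof.
  split.
  - intros [x [Yx [x' [Sx' st]]]]. exists x'; split; [exists x; auto | exact Sx'].
  - intros [x' [[x [Yx st]] Sx']]. exists x; split; [exact Yx | exists x'; auto].
Qed.

Lemma lo_t_diamond {SS : (X -> Prop) -> Prop} (a : A) {S : X -> Prop} :
  SS S -> lo_t step SS (diamond step a S).
Proof. intros HS; left; exists a, S; split; [exact HS | intros x; tauto]. Qed.

Lemma lo_t_full (SS : (X -> Prop) -> Prop) : lo_t step SS (fun _ => True).
Proof. right; intros x; tauto. Qed.

Lemma alpha_t_lo_t_post {SS : (X -> Prop) -> Prop} (a : A) {X1 X2 : X -> Prop} :
  alpha_t (lo_t step SS) X1 X2 -> alpha_t SS (post a X1) (post a X2).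
Proof.
  intros H12 S HS.
  rewrite <- !meets_diamond.
  exact (H12 _ (lo_t_diamond a HS)).
Qed.

Lemma c_t_diamond {SS : (X -> Prop) -> Prop} (a : A) {S : X -> Prop} :
  c_t SS S -> c_t (lo_t step SS) (diamond step a S).
Proof.
  intros HS X1 X2 H12.
  rewrite !meets_diamond.
  exact (HS _ _ (alpha_t_lo_t_post a H12)).
Qed.

Lemma c_t_lo_t_full (SS : (X -> Prop) -> Prop) :
  c_t (lo_t step SS) (fun _ => True).
Proof. intros X1 X2 H12; exact (H12 _ (lo_t_full SS)). Qed.

End Transitions.

Theorem mainTheorem11 (X A : Type) (step : X -> A -> X -> Prop)
  (SS : (X -> Prop) -> Prop) :
  fam_subset (lo_t step (c_t SS)) (c_t (lo_t step SS)).
Proof.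
  intros T [[a [S [HS HT]]] | HT]; apply (gamma_t_seteq HT).
  - exact (c_t_diamond step a HS).
  - exact (c_t_lo_t_full step SS).
Qed.
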